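(* Let $\mathcal C$ be an operadic category. The category $\mathrm{Coll}_{\mathcal C}^U$ of right $U$-modules in $\mathrm{Coll}_{\mathcal C}$ is equivalent to the category $[\mathbb C^{\mathrm{op}},\mathbf{Set}]$ of presheaves on $\mathbb C$.
   Context: Operadic categories: $\mathcal S$ is a skeleton of finite sets, with fixed equivalences $R_I:\mathcal S/I\to\mathcal S^I$ sending $f:J\to I$ to its fibres. An operadic category is a category $\mathcal C$ with a functor $|\cdot|:\mathcal C\to\mathcal S$ and functors $R_c:\mathcal C/c\to\mathcal C^{|c|}$ with $|\cdot|^{|c|}\circ R_c=R_{|c|}\circ(|\cdot|/c)$; the fibre $\psi^{-1}i$ of $\psi:c\to d$ at $i\in|d|$ is the $i$-th component of $R_d(\psi)$; $\varphi^\psi=R_d(\varphi:\psi\varphi\to\psi)$ for $\varphi:b\to c,\psi:c\to d$; $u$ is trivial if $|u|=1$ and $R_u=\mathrm{dom}$. Axioms: fibres of identities are trivial; double slice condition: for $\psi:c\to d$, $R_c\circ(\mathrm{dom}/\psi)=(\cong)\circ(\prod_jR_{\psi^{-1}j})\circ(R_d/\psi)$ as functors $(\mathcal C/d)/\psi\to\mathcal C^{|c|}$, via $\mathcal C^{|d|}/R_d\psi\cong\prod_j\mathcal C/\psi^{-1}j$ and $|c|\cong\sum_j|\psi|^{-1}j$. A morphism is fibrewise trivial if all its fibres are trivial; these form a wide subcategory $\mathbb C$ of $\mathcal C$. $\mathrm{Coll}_{\mathcal C}$ is the skew monoidal category with underlying category $\mathbf{Set}/C$ ($C$ = object set; objects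 $\partial:X\to C$, $X_c=\partial^{-1}c$), tensor $(X*Y)_c=\sum_{\varphi:c\to d}X_d\times\prod_{i\in|d|}Y_{\varphi^{-1}i}$ (elements $(x,\varphi,y)$), unit $U$ the set of trivial objects, and maps $\alpha(x,\psi,y,\varphi,z)=(x,\psi\varphi,y,\varphi^\psi,z)$, $\lambda(u,\varphi,x)=x$, $\rho(x)=(x,1_{\partial x},(1_{\partial x}^{-1}i)_i)$. A right $U$-module is an object $X$ with $r:X*U\to X$ such that $r\circ(r*1)=r\circ(1*\lambda_U)\circ\alpha_{X,U,U}$ and $r\circ\rho_X=1_X$; morphisms are maps commuting with the actions. $\mathrm{Coll}_{\mathcal C}^U$ denotes this category of right $U$-modules. *)

From Stdlib Require Import ProofIrrelevance.
From mathcomp Require Import all_boot.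

Set Implicit Arguments.
Unset Strict Implicit.
Unset Printing Implicit Defensive.

(* The skeleton S of finite sets: objects n : nat (standing for 'I_n),  *)
(* morphisms functions 'I_m -> 'I_n.  The fixed equivalence R_I sends   *)
(* f : 'I_m -> 'I_n to its fibres f^{-1}(i), of cardinality fibcard f i, *)
(* identified with 'I_(fibcard f i) by the order-preserving bijection:  *)
(* the element k of f^{-1}(f k) has position fibpos f k.               *)
Definition fibset m n (f : 'I_m -> 'I_n) (i : 'I_n) : {set 'I_m} :=
  [set k | f k == i].
Definition fibcard m n (f : 'I_m -> 'I_n) (i : 'I_n) : nat := #|fibset f i|.
Definition fibpos m n (f : 'I_m -> 'I_n) (k : 'I_m) : nat :=
  index k (enum (fibset f (f k))).

(*  card c = |c|, cardf f = |f|, fib psi i = psi^{-1} i (object part of *)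
(*  R_d), fibmap phi psi i = (phi^psi)_i (morphism part of R_d on the   *)
(*  slice morphism phi : (b, psi phi) -> (c, psi) of C/d).              *)
Record OpData := {
  Ob : Type;
  Hom : Ob -> Ob -> Type;
  idm : forall a, Hom a a;
  comp : forall a b c, Hom b c -> Hom a b -> Hom a c;
  card : Ob -> nat;
  cardf : forall a b, Hom a b -> 'I_(card a) -> 'I_(card b);
  fib : forall c d, Hom c d -> 'I_(card d) -> Ob;
  fibmap : forall b c d (phi : Hom b c) (psi : Hom c d) (i : 'I_(card d)),
      Hom (fib (comp psi phi) i) (fib psi i)
}.

Arguments Hom {o} _ _.
Arguments idm {o} a.
Arguments comp {o a b c} _ _.
Arguments card {o} _.
Arguments cardf {o a b} _ _.
Arguments fib {o c d} _ _.
Arguments fibmap {o b c d} phi psi i.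

Definition castHom (C : OpData) (a a' b b' : Ob C) (e1 : a = a') (e2 : b = b')
  (f : Hom a b) : Hom a' b' :=
  match e1 in _ = x return Hom x b' with
  | erefl => match e2 in _ = y return Hom a y with erefl => f end
  end.

(* u is trivial: |u| = 1 and R_u = dom : C/u -> C^1 = C *)
Definition is_trivial (C : OpData) (u : Ob C) : Prop :=
  card u = 1 /\
  (forall (x : Ob C) (f : Hom x u) (i : 'I_(card u)), fib f i = x) /\
  (forall (b c : Ob C) (phi : Hom b c) (psi : Hom c u) (i : 'I_(card u))
     (e1 : fib (comp psi phi) i = b) (e2 : fib psi i = c),
     castHom e1 e2 (fibmap phi psi i) = phi).

(* fibrewise trivial morphisms (the morphisms of the wide subcategory ℂ) *)
Definition fwt (C : OpData) (a b : Ob C) (f : Hom a b) : Prop :=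
  forall i, is_trivial (fib f i).

Record is_opcat (C : OpData) : Prop := {
  comp_assoc : forall (a b c d : Ob C) (f : Hom a b) (g : Hom b c) (h : Hom c d),
      comp h (comp g f) = comp (comp h g) f;
  comp_idl : forall (a b : Ob C) (f : Hom a b), comp (idm b) f = f;
  comp_idr : forall (a b : Ob C) (f : Hom a b), comp f (idm a) = f;
  cardf_id : forall (a : Ob C) k, cardf (idm a) k = k;
  cardf_comp : forall (a b c : Ob C) (f : Hom a b) (g : Hom b c) k,
      cardf (comp g f) k = cardf g (cardf f k);
  fibmap_id : forall (c d : Ob C) (psi : Hom c d) i
      (e : fib (comp psi (idm c)) i = fib psi i),
      castHom e erefl (fibmap (idm c) psi i) = idm (fib psi i);
  fibmap_comp : forall (a b c d : Ob C) (chi : Hom a b) (phi : Hom b c) (psi : Hom c d) i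
      (e : fib (comp psi (comp phi chi)) i = fib (comp (comp psi phi) chi) i),
      castHom e erefl (fibmap (comp phi chi) psi i)
      = comp (fibmap phi psi i) (fibmap chi (comp psi phi) i);
  (* |.|^{|c|} o R_c = R_{|c|} o (|.|/c), on objects and on morphisms *)
  card_fib : forall (c d : Ob C) (psi : Hom c d) i,
      card (fib psi i) = fibcard (cardf psi) i;
  cardf_fibmap : forall (b c d : Ob C) (phi : Hom b c) (psi : Hom c d) i
      (k : 'I_(card b)) (l : 'I_(card (fib (comp psi phi) i))),
      cardf (comp psi phi) k = i -> fibpos (cardf (comp psi phi)) k = val l ->
      val (cardf (fibmap phi psi i) l) = fibpos (cardf psi) (cardf phi k);
  fib_id_trivial : forall (c : Ob C) i, is_trivial (fib (idm c) i);
  dslice_ob : forall (b c d : Ob C) (phi : Hom b c) (psi : Hom c d) i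
      (l : 'I_(card (fib psi i))) (k : 'I_(card c)),
      cardf psi k = i -> fibpos (cardf psi) k = val l ->
      fib phi k = fib (fibmap phi psi i) l;
  dslice_hom : forall (a b c d : Ob C) (theta : Hom a b) (phi : Hom b c) (psi : Hom c d) i
      (l : 'I_(card (fib psi i))) (k : 'I_(card c)),
      cardf psi k = i -> fibpos (cardf psi) k = val l ->
      forall (e1 : fib (comp (fibmap phi psi i) (fibmap theta (comp psi phi) i)) l
                   = fib (comp phi theta) k)
             (e2 : fib (fibmap phi psi i) l = fib phi k),
      castHom e1 e2 (fibmap (fibmap theta (comp psi phi) i) (fibmap phi psi i) l)
      = fibmap theta phi k
}.

Record OpCat := { opdata :> OpData; opax : is_opcat opdata }.

Record coll (C : OpData) := Coll { elt :> Type; dd : elt -> Ob C }.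
Arguments dd {C c} _.

(* elements (x, phi, y) of X * Y, lying over tc = dom phi *)
Record tens (C : OpData) (X Y : coll C) := Tens {
  tc : Ob C; td : Ob C; tphi : Hom tc td;
  tx : X; txd : dd tx = td;
  ty : 'I_(card td) -> Y; tyd : forall i, dd (ty i) = fib tphi i }.
Arguments Tens {C X Y} tc td tphi tx txd ty tyd.
Arguments tc {C X Y} _.
Arguments td {C X Y} _.
Arguments tphi {C X Y} _.
Arguments tx {C X Y} _.
Arguments txd {C X Y} _.
Arguments ty {C X Y} _ _.
Arguments tyd {C X Y} _ _.

Definition tensc (C : OpData) (X Y : coll C) : coll C :=
  {| elt := tens X Y; dd := @tc C X Y |}.

Definition tmap (C : OpData) (X X' Y Y' : coll C) (f : X -> X')
  (hf : forall x, dd (f x) = dd x) (g : Y -> Y') (hg : forall y, dd (g y) = dd y)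
  (t : tens X Y) : tens X' Y' :=
  Tens (tc t) (td t) (tphi t) (f (tx t)) (etrans (hf _) (txd t))
       (fun i => g (ty t i)) (fun i => etrans (hg _) (tyd t i)).

Definition unitc (C : OpData) : coll C :=
  {| elt := {u : Ob C | is_trivial u}; dd := fun u => proj1_sig u |}.

Lemma lam_triv (C : OpData) (Y : coll C) (t : tens (unitc C) Y) :
  is_trivial (td t).
Proof. by rewrite -(txd t); exact: (proj2_sig (tx t)). Qed.

Lemma lam_card (C : OpData) (Y : coll C) (t : tens (unitc C) Y) : 0 < card (td t).
Proof. by case: (lam_triv t) => H _; rewrite H. Qed.

Definition lam (C : OpData) (Y : coll C) (t : tens (unitc C) Y) : Y :=
  ty t (Ordinal (lam_card t)).

Lemma lam_over (C : OpData) (Y : coll C) (t : tens (unitc C) Y) :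
  dd (lam t) = tc t.
Proof.
rewrite /lam (tyd t); case: (lam_triv t) => _ [H _]; exact: H.
Qed.

Definition rho (C : OpCat) (X : coll C) (x : X) : tens X (unitc C) :=
  @Tens C X (unitc C) (dd x) (dd x) (idm (dd x)) x erefl
    (fun i => exist _ (fib (idm (dd x)) i) (fib_id_trivial (opax C) i))
    (fun i => erefl).

(* the element k of |c| corresponding to (i, l) under |c| ~ sum_i |psi^{-1} i| *)
Definition kk (C : OpCat) (c d : Ob C) (psi : Hom c d) (i : 'I_(card d))
  (l : 'I_(card (fib psi i))) : 'I_(card c) :=
  @enum_val _ (mem (fibset (cardf psi) i)) (cast_ord (card_fib (opax C) psi i) l).

Arguments kk {C c d} psi i l.

Lemma kk_spec (C : OpCat) (c d : Ob C) (psi : Hom c d) i l :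
  cardf psi (kk psi i l) = i /\ fibpos (cardf psi) (kk psi i l) = val l.
Proof.
have Hin := enum_valP (cast_ord (card_fib (opax C) psi i) l).
rewrite inE in Hin; move/eqP: Hin => Hk.
split; first exact: Hk.
rewrite /fibpos /kk Hk.
rewrite (enum_val_nth (enum_val (cast_ord (card_fib (opax C) psi i) l))).
rewrite index_uniq ?enum_uniq //.
by rewrite -cardE ltn_ord.
Qed.

Arguments kk_spec {C c d} psi i l.

Lemma kk_fib (C : OpCat) (b c d : Ob C) (phi : Hom b c) (psi : Hom c d) i l :
  fib phi (kk psi i l) = fib (fibmap phi psi i) l.
Proof.
by case: (kk_spec psi i l) => H1 H2; exact: (dslice_ob (opax C) phi H1 H2).
Qed.

Arguments kk_fib {C b c d} phi psi i l.

(* alpha (x, psi, y, phi, z) = (x, psi phi, y, phi^psi, z) *)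
Definition alpha_aux (C : OpCat) (X Y Z : coll C) (b c d : Ob C)
  (phi : Hom b c) (psi : Hom c d) (x : X) (hx : dd x = d)
  (y : 'I_(card d) -> Y) (hy : forall i, dd (y i) = fib psi i)
  (z : 'I_(card c) -> Z) (hz : forall k, dd (z k) = fib phi k)
  : tens X (tensc Y Z) :=
  @Tens C X (tensc Y Z) b d (comp psi phi) x hx
    (fun i => @Tens C Y Z (fib (comp psi phi) i) (fib psi i) (fibmap phi psi i)
                (y i) (hy i) (fun l => z (kk psi i l))
                (fun l => etrans (hz _) (kk_fib phi psi i l)))
    (fun i => erefl).

Definition alpha (C : OpCat) (X Y Z : coll C) (t : tens (tensc X Y) Z)
  : tens X (tensc Y Z) :=
  match t with
  | Tens b c' phi t0 e z hz =>
    (match e in _ = c'' return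
       forall (phi : Hom b c'') (z : 'I_(card c'') -> Z),
         (forall k, dd (z k) = fib phi k) -> tens X (tensc Y Z) with
     | erefl => fun phi z hz =>
         @alpha_aux C X Y Z b (tc t0) (td t0) phi (tphi t0) (tx t0) (txd t0)
           (ty t0) (tyd t0) z hz
     end) phi z hz
  end.

Record rmodule (C : OpCat) := RModule {
  mcar : coll C;
  mact : tens mcar (unitc C) -> mcar;
  mact_over : forall t, dd (mact t) = tc t;
  mact_assoc : forall t : tens (tensc mcar (unitc C)) (unitc C),
      mact (@tmap C (tensc mcar (unitc C)) mcar (unitc C) (unitc C)
              mact mact_over (fun u => u) (fun _ => erefl) t)
      = mact (@tmap C mcar mcar (tensc (unitc C) (unitc C)) (unitc C)
              (fun x => x) (fun _ => erefl)
              (@lam C (unitc C)) (@lam_over C (unitc C)) (alpha t));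
  mact_unit : forall x, mact (rho x) = x
}.

Arguments mact {C} r _.
Arguments mcar {C} r.

Definition rmod_hom (C : OpCat) (M N : rmodule C) : Type :=
  {f : mcar M -> mcar N |
     (forall x, dd (f x) = dd x) /\
     forall (hf : forall x, dd (f x) = dd x) (t : tens (mcar M) (unitc C)),
       f (mact M t) = mact N (@tmap C (mcar M) (mcar N) (unitc C) (unitc C)
                                 f hf (fun u => u) (fun _ => erefl) t)}.

Record presheaf (C : OpCat) := Presheaf {
  ps : Ob C -> Type;
  pact : forall a b (f : Hom a b), fwt f -> ps b -> ps a;
  pact_id : forall c (h : fwt (idm c)) x, pact h x = x;
  pact_comp : forall a b c (f : Hom a b) (g : Hom b c)
      (hf : fwt f) (hg : fwt g) (hgf : fwt (comp g f)) x,
      pact hgf x = pact hf (pact hg x)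
}.
Arguments pact {C} p {a b f} _ _.

Definition psh_hom (C : OpCat) (P Q : presheaf C) : Type :=
  {eta : forall c, ps P c -> ps Q c |
     forall a b (f : Hom a b) (h : fwt f) x, eta a (pact P h x) = pact Q h (eta b x)}.

Record Category := {
  cOb : Type;
  cHom : cOb -> cOb -> Type;
  cid : forall a, cHom a a;
  ccomp : forall x y z, cHom y z -> cHom x y -> cHom x z;
  cassoc : forall a b c d (f : cHom a b) (g : cHom b c) (h : cHom c d),
      ccomp h (ccomp g f) = ccomp (ccomp h g) f;
  cidl : forall a b (f : cHom a b), ccomp (cid b) f = f;
  cidr : forall a b (f : cHom a b), ccomp f (cid a) = f
}.
Arguments cHom {c} _ _ : rename.
Arguments cid {c} a : rename.
Arguments ccomp {c x y z} _ _ : rename.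

Record Functor (A B : Category) := {
  fob : cOb A -> cOb B;
  fhom : forall a b, cHom a b -> cHom (fob a) (fob b);
  fid : forall a, fhom (cid a) = cid (fob a);
  fcomp : forall a b c (f : cHom a b) (g : cHom b c),
      fhom (ccomp g f) = ccomp (fhom g) (fhom f)
}.
Arguments fob {A B} _ _.
Arguments fhom {A B} _ {a b} _.

Definition Fid (A : Category) : Functor A A :=
  {| fob := fun a => a; fhom := fun a b f => f;
     fid := fun a => erefl; fcomp := fun a b c f g => erefl |}.

Lemma Fcomp_id (A B D : Category) (G : Functor B D) (F : Functor A B) a :
  fhom G (fhom F (cid a)) = cid (fob G (fob F a)).
Proof. by rewrite fid fid. Qed.

Lemma Fcomp_comp (A B D : Category) (G : Functor B D) (F : Functor A B)
  a b c (f : cHom a b) (g : cHom b c) :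
  fhom G (fhom F (ccomp g f)) = ccomp (fhom G (fhom F g)) (fhom G (fhom F f)).
Proof. by rewrite !fcomp. Qed.

Definition Fcomp (A B D : Category) (G : Functor B D) (F : Functor A B)
  : Functor A D :=
  {| fob := fun a => fob G (fob F a);
     fhom := fun a b f => fhom G (fhom F f);
     fid := Fcomp_id G F; fcomp := Fcomp_comp G F |}.

Definition nat_iso (A B : Category) (F G : Functor A B) : Prop :=
  exists (eta : forall a, cHom (fob F a) (fob G a))
         (eta' : forall a, cHom (fob G a) (fob F a)),
    (forall a, ccomp (eta' a) (eta a) = cid _ /\ ccomp (eta a) (eta' a) = cid _) /\
    (forall a b (f : cHom a b), ccomp (fhom G f) (eta a) = ccomp (eta b) (fhom F f)).

Definition cat_equiv (A B : Category) : Prop :=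
  exists (F : Functor A B) (G : Functor B A),
    nat_iso (Fid A) (Fcomp G F) /\ nat_iso (Fcomp F G) (Fid B).

Lemma sig_eqP (A : Type) (P : A -> Prop) (x y : sig P) :
  proj1_sig x = proj1_sig y -> x = y.
Proof.
case: x => x px; case: y => y py /= E; subst y.
by rewrite (proof_irrelevance _ px py).
Qed.

Lemma tmap_id (C : OpData) (X Y : coll C) hf hg (t : tens X Y) :
  @tmap C X X Y Y (fun x => x) hf (fun y => y) hg t = t.
Proof.
case: t => c d phi x hx y hy; rewrite /tmap /=.
set p := etrans _ _; set q := fun i => etrans _ _; clearbody p q.
by rewrite (proof_irrelevance _ p hx) (proof_irrelevance _ q hy).
Qed.

Lemma tmap_comp (C : OpData) (X1 X2 X3 Y : coll C) (f : X1 -> X2) (g : X2 -> X3)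
  hf hg hgf hi1 hi2 hi3 (t : tens X1 Y) :
  @tmap C X2 X3 Y Y g hg (fun y => y) hi2 (@tmap C X1 X2 Y Y f hf (fun y => y) hi1 t)
  = @tmap C X1 X3 Y Y (fun x => g (f x)) hgf (fun y => y) hi3 t.
Proof.
case: t => c d phi x hx y hy; rewrite /tmap /=.
set p := etrans _ _; set q := fun i => etrans _ _; clearbody p q.
set p' := etrans _ _; set q' := fun i => etrans _ _; clearbody p' q'.
by rewrite (proof_irrelevance _ p p') (proof_irrelevance _ q q').
Qed.

Section ModCat.
Variable C : OpCat.

Definition rmod_id (M : rmodule C) : rmod_hom M M.
Proof.
exists (fun x => x); split => // hf t.
by rewrite tmap_id.
Defined.

Definition rmod_comp (M N P : rmodule C) (g : rmod_hom N P) (f : rmod_hom M N)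
  : rmod_hom M P.
Proof.
exists (fun x => proj1_sig g (proj1_sig f x)).
case: f => f [hf cf]; case: g => g [hg cg] /=.
have hgf : forall x, dd (g (f x)) = dd x by move=> x; rewrite hg hf.
split => // hgf' t.
rewrite (cf hf) (cg hg).
by congr (mact P _); apply: tmap_comp.
Defined.

Definition ModCat : Category.
Proof.
refine {| cOb := rmodule C; cHom := @rmod_hom C; cid := rmod_id;
          ccomp := rmod_comp |}.
- by move=> *; apply: sig_eqP.
- by move=> a b [f hf]; apply: sig_eqP.
- by move=> a b [f hf]; apply: sig_eqP.
Defined.

Definition psh_id (P : presheaf C) : psh_hom P P.
Proof. by exists (fun c x => x). Defined.

Definition psh_comp (P Q R : presheaf C) (g : psh_hom Q R) (f : psh_hom P Q)
  : psh_hom P R.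
Proof.
exists (fun c x => proj1_sig g c (proj1_sig f c x)).
by case: f => f hf; case: g => g hg /= a b u h x; rewrite hf hg.
Defined.

Definition PShCat : Category.
Proof.
refine {| cOb := presheaf C; cHom := @psh_hom C; cid := psh_id;
          ccomp := psh_comp |}.
- by move=> *; apply: sig_eqP.
- by move=> a b [f hf]; apply: sig_eqP.
- by move=> a b [f hf]; apply: sig_eqP.
Defined.

End ModCat.

(* An element (x, phi, u) of X * U has all its U-components forced: u_i is
   the fibre phi^{-1} i, so phi is fibrewise trivial, and the element is just
   a pair (x, phi) with phi : c -> dd x in the subcategory of fibrewise trivial
   maps.  A right U-action is therefore an operation x |-> x . phi.  Since
   (1 * lambda) alpha sends ((x, psi), phi) to (x, psi phi), the associativity
   axiom says (x . psi) . phi = x . (psi phi) and the unit axiom says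
   x . 1 = x: a right U-module is a presheaf on fibrewise trivial maps, with
   X |-> (c |-> X_c) and P |-> (sum_c P c) mutually inverse. *)

From Stdlib Require Import ProofIrrelevance FunctionalExtensionality.
From mathcomp Require Import all_boot.

Set Implicit Arguments.
Unset Strict Implicit.
Unset Printing Implicit Defensive.

Lemma fwt_comp (C : OpCat) (a b c : Ob C) (f : Hom a b) (g : Hom b c) :
  fwt f -> fwt g -> fwt (comp g f).
Proof.
move=> hf hg i.
(* (g f)^{-1} i is the fibre of f^g over the trivial object g^{-1} i, which by
   the double slice condition is a fibre of f. *)
have [card1 [fib_dom _]] := hg i.
have l : 'I_(card (fib g i)) by rewrite card1; exact: ord0.
by rewrite -(fib_dom _ (fibmap f g i) l) -kk_fib; apply: hf.
Qed.

Section TensorUnit.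
Variable C : OpData.
Implicit Type X : coll C.

Definition tensU X (a b : Ob C) (f : Hom a b) (hf : fwt f) (x : X)
    (e : dd x = b) : tens X (unitc C) :=
  Tens a b f x e (fun i => exist _ (fib f i) (hf i) : unitc C) (fun i => erefl).
Arguments tensU {X a b} f hf x e.

Lemma tensU_pi X a b (f : Hom a b) hf1 hf2 (x : X) e1 e2 :
  tensU f hf1 x e1 = tensU f hf2 x e2.
Proof.
by rewrite (proof_irrelevance _ hf1 hf2) (proof_irrelevance _ e1 e2).
Qed.

Definition fwt_of X (t : tens X (unitc C)) : fwt (tphi t) :=
  fun i => eq_ind _ (@is_trivial C) (proj2_sig (ty t i)) _ (tyd t i).
Arguments fwt_of {X} t.

Lemma tensU_tphi X (t : tens X (unitc C)) (hf : fwt (tphi t)) :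
  t = tensU (tphi t) hf (tx t) (txd t).
Proof.
case: t hf => c d phi x ex y hy /= hf.
have Ey : y = fun i => exist _ (fib phi i) (hf i).
  by apply: functional_extensionality => i; apply: sig_eqP; exact: hy.
by subst y; rewrite (proof_irrelevance _ hy (fun i => erefl)).
Qed.

Lemma tensU_ind X (P : tens X (unitc C) -> Prop) :
  (forall (x : X) a (f : Hom a (dd x)) hf, P (tensU f hf x erefl)) ->
  forall t, P t.
Proof.
move=> IH t; rewrite (tensU_tphi (fwt_of t)).
case: t => c d phi x ex y hy /=; case: d / ex phi y hy => phi y hy.
exact: IH.
Qed.

Lemma tmap_tensU X X' (h : X -> X') hh hu a b (f : Hom a b) hf x e :
  @tmap C X X' (unitc C) (unitc C) h hh (fun u => u) hu (tensU f hf x e)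
  = tensU f hf (h x) (etrans (hh x) e).
Proof. by rewrite /tmap /tensU /=; congr Tens; apply: proof_irrelevance. Qed.

End TensorUnit.
Arguments tensU {C X a b} f hf x e.
Arguments tensU_pi {C X a b} f hf1 hf2 x e1 e2.
Arguments fwt_of {C X} t.

Section Associator.
Variables (C : OpCat) (X : coll C).
Notation U := (unitc C).

Lemma tensU2_ind (P : tens (tensc X U) U -> Prop) :
  (forall (x : X) a b (f : Hom a b) (g : Hom b (dd x)) hf hg,
     P (tensU (X := tensc X U) f hf (tensU g hg x erefl) erefl)) ->
  forall t, P t.
Proof.
by move=> IH; elim/tensU_ind => t; elim/tensU_ind: t => *; apply: IH.
Qed.

Lemma lam_alpha_tensU2 a b c (f : Hom a b) (g : Hom b c) hf hg hgf (x : X)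
    (e : dd x = c) :
  @tmap C X X (tensc U U) U (fun x => x) (fun _ => erefl)
    (@lam C U) (@lam_over C U)
    (alpha (tensU (X := tensc X U) f hf (tensU g hg x e) erefl))
  = tensU (comp g f) hgf x e.
Proof.
match goal with |- ?t = _ => rewrite (tensU_tphi (X := X) (t := t) hgf) end.
by rewrite /= (proof_irrelevance _ (etrans erefl e) e).
Qed.

End Associator.

Section ModuleAsPresheaf.
Variables (C : OpCat) (M : rmodule C).
Notation U := (unitc C).

Lemma mact_tensU_id c (h : fwt (idm c)) (x : mcar M) (e : dd x = c) :
  mact M (tensU (idm c) h x e) = x.
Proof.
case: c / e h => h.
rewrite (tensU_pi _ h (fun i => fib_id_trivial (opax C) i) _ _ erefl).
exact: mact_unit.
Qed.

Lemma mact_tensU_comp a b c (f : Hom a b) (g : Hom b c) hf hg hgf (x : mcar M)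
    (e : dd x = c) :
  mact M (tensU (comp g f) hgf x e)
  = mact M (tensU f hf (mact M (tensU g hg x e)) (mact_over _)).
Proof.
have := mact_assoc (tensU (X := tensc (mcar M) U) f hf (tensU g hg x e) erefl).
rewrite tmap_tensU lam_alpha_tensU2 => ->.
by congr (mact M _); exact: tensU_pi.
Qed.

Definition mod_fibre (c : Ob C) : Type := {x : mcar M | dd x = c}.

Definition mod_fibre_act a b (f : Hom a b) (hf : fwt f) (p : mod_fibre b) :
    mod_fibre a :=
  exist _ (mact M (tensU f hf (proj1_sig p) (proj2_sig p))) (mact_over _).

Lemma mod_fibre_act_id (c : Ob C) (h : fwt (idm c)) p : mod_fibre_act h p = p.
Proof. by apply: sig_eqP; exact: mact_tensU_id. Qed.

Lemma mod_fibre_act_comp (a b c : Ob C) (f : Hom a b) (g : Hom b c)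
    (hf : fwt f) (hg : fwt g) (hgf : fwt (comp g f)) p :
  mod_fibre_act hgf p = mod_fibre_act hf (mod_fibre_act hg p).
Proof. by apply: sig_eqP; apply: mact_tensU_comp. Qed.

Definition mod_presheaf : presheaf C :=
  Presheaf mod_fibre_act_id mod_fibre_act_comp.

End ModuleAsPresheaf.

Section ModulesToPresheaves.
Variable C : OpCat.

Definition mod_presheaf_hom (M N : rmodule C) (phi : rmod_hom M N) :
  psh_hom (mod_presheaf M) (mod_presheaf N).
Proof.
pose eta c (p : mod_fibre M c) : mod_fibre N c :=
  exist _ (proj1_sig phi (proj1_sig p))
          (etrans (proj1 (proj2_sig phi) _) (proj2_sig p)).
exists eta => a b f h [x e]; apply: sig_eqP => /=.
case: phi eta => ph [hph cph] /= _.
by rewrite (cph hph) tmap_tensU; congr (mact N _); exact: tensU_pi.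
Defined.

Lemma mod_presheaf_hom_id (M : rmodule C) :
  mod_presheaf_hom (cid (c := ModCat C) M)
  = cid (c := PShCat C) (mod_presheaf M).
Proof.
apply: sig_eqP; apply: functional_extensionality_dep => c.
by apply: functional_extensionality => p; apply: sig_eqP.
Qed.

Lemma mod_presheaf_hom_comp (M N P : rmodule C) (f : rmod_hom M N)
    (g : rmod_hom N P) :
  mod_presheaf_hom (ccomp (c := ModCat C) g f)
  = ccomp (c := PShCat C) (mod_presheaf_hom g) (mod_presheaf_hom f).
Proof.
apply: sig_eqP; apply: functional_extensionality_dep => c.
by apply: functional_extensionality => p; apply: sig_eqP.
Qed.

Definition mod_to_psh : Functor (ModCat C) (PShCat C) :=
  @Build_Functor (ModCat C) (PShCat C) (@mod_presheaf C) mod_presheaf_hom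
    mod_presheaf_hom_id mod_presheaf_hom_comp.

End ModulesToPresheaves.

Lemma pact_pi (C : OpCat) (P : presheaf C) a b (f : Hom a b) (h1 h2 : fwt f) p :
  pact P h1 p = pact P h2 p.
Proof. by rewrite (proof_irrelevance _ h1 h2). Qed.

Section PresheafAsModule.
Variables (C : OpCat) (P : presheaf C).
Notation U := (unitc C).

Definition psh_total : coll C :=
  {| elt := {c : Ob C & ps P c}; dd := fun x => projT1 x |}.

Definition psh_total_act (t : tens psh_total U) : psh_total :=
  existT _ (tc t)
    (pact P (fwt_of t) (eq_rect _ (ps P) (projT2 (tx t)) _ (txd t))).

Definition psh_total_act_over t : dd (psh_total_act t) = tc t := erefl.

Lemma psh_total_act_assoc (t : tens (tensc psh_total U) U) :
  psh_total_act (@tmap C (tensc psh_total U) psh_total U U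
                   psh_total_act psh_total_act_over
                   (fun u => u) (fun _ => erefl) t)
  = psh_total_act (@tmap C psh_total psh_total (tensc U U) U (fun x => x)
                     (fun _ => erefl) (@lam C U) (@lam_over C U) (alpha t)).
Proof.
elim/tensU2_ind: t => x a b f g hf hg.
rewrite tmap_tensU (lam_alpha_tensU2 _ _ (fwt_comp hf hg)).
by congr existT; symmetry; apply: pact_comp.
Qed.

Lemma psh_total_act_unit x : psh_total_act (rho x) = x.
Proof. by case: x => c p; congr existT; apply: pact_id. Qed.

Definition psh_module : rmodule C :=
  RModule psh_total_act_assoc psh_total_act_unit.

End PresheafAsModule.

Section PresheavesToModules.
Variable C : OpCat.

Definition psh_module_hom (P Q : presheaf C) (eta : psh_hom P Q) :
  rmod_hom (psh_module P) (psh_module Q).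
Proof.
exists (fun x => existT _ (projT1 x) (proj1_sig eta _ (projT2 x))).
split=> // hf; elim/tensU_ind => x a f h.
rewrite tmap_tensU /=; congr existT.
by rewrite (proof_irrelevance _ (hf x) erefl) (proj2_sig eta); apply: pact_pi.
Defined.

Lemma psh_module_hom_id (P : presheaf C) :
  psh_module_hom (cid (c := PShCat C) P) = cid (c := ModCat C) (psh_module P).
Proof. by apply: sig_eqP; apply: functional_extensionality => -[]. Qed.

Lemma psh_module_hom_comp (P Q R : presheaf C) (f : psh_hom P Q)
    (g : psh_hom Q R) :
  psh_module_hom (ccomp (c := PShCat C) g f)
  = ccomp (c := ModCat C) (psh_module_hom g) (psh_module_hom f).
Proof. by apply: sig_eqP; apply: functional_extensionality => -[]. Qed.

Definition psh_to_mod : Functor (PShCat C) (ModCat C) :=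
  @Build_Functor (PShCat C) (ModCat C) (@psh_module C) psh_module_hom
    psh_module_hom_id psh_module_hom_comp.

End PresheavesToModules.

Lemma existT_fibre_eq (A B : Type) (f : A -> B) (x y : A) b1 b2
    (e1 : f x = b1) (e2 : f y = b2) :
  x = y -> existT (fun b => {a | f a = b}) b1 (exist _ x e1)
           = existT (fun b => {a | f a = b}) b2 (exist _ y e2).
Proof. by move=> E; subst y; case: b1 / e1; case: b2 / e2. Qed.

Section Equivalence.
Variable C : OpCat.

Definition mod_to_total (M : rmodule C) :
  rmod_hom M (psh_module (mod_presheaf M)).
Proof.
exists (fun x => existT _ (dd x) (exist _ x erefl)).
split=> // hf; elim/tensU_ind => x a f h.
rewrite tmap_tensU /=; apply: existT_fibre_eq.
rewrite (proof_irrelevance _ (hf x) erefl) /=.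
by congr (mact M _); exact: tensU_pi.
Defined.

Definition total_to_mod (M : rmodule C) :
  rmod_hom (psh_module (mod_presheaf M)) M.
Proof.
exists (fun x : psh_total (mod_presheaf M) => proj1_sig (projT2 x)).
split; first by case=> c [x e].
move=> hf; elim/tensU_ind => -[c [y e]] a f h.
rewrite tmap_tensU /=; case: c / e f h hf => f h hf /=.
by congr (mact M _); exact: tensU_pi.
Defined.

Lemma mod_to_psh_unit_iso :
  nat_iso (Fid (ModCat C)) (Fcomp (psh_to_mod C) (mod_to_psh C)).
Proof.
exists mod_to_total, total_to_mod; split.
- move=> M; split; apply: sig_eqP; apply: functional_extensionality => //.
  by case=> c [x e] /=; apply: existT_fibre_eq.
- move=> M N phi; apply: sig_eqP; apply: functional_extensionality => x /=.
  exact: existT_fibre_eq.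
Qed.

Definition total_fibre_to_psh (P : presheaf C) :
  psh_hom (mod_presheaf (psh_module P)) P.
Proof.
exists (fun c p => eq_rect _ (ps P) (projT2 (proj1_sig p)) _ (proj2_sig p)).
move=> a b f h [[c q] e] /=; case: b / e f h => f h /=.
exact: pact_pi.
Defined.

Definition psh_to_total_fibre (P : presheaf C) :
  psh_hom P (mod_presheaf (psh_module P)).
Proof.
exists (fun c p =>
  exist _ (existT (ps P) c p) erefl : mod_fibre (psh_module P) c).
move=> a b f h p; apply: sig_eqP => /=.
by congr existT; apply: pact_pi.
Defined.

Lemma mod_to_psh_counit_iso :
  nat_iso (Fcomp (mod_to_psh C) (psh_to_mod C)) (Fid (PShCat C)).
Proof.
exists total_fibre_to_psh, psh_to_total_fibre; split.
- move=> P; split; apply: sig_eqP; apply: functional_extensionality_dep => c;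
    apply: functional_extensionality => //.
  by case=> -[c' q] e /=; case: c / e; apply: sig_eqP.
- move=> P Q eta; apply: sig_eqP; apply: functional_extensionality_dep => c;
    apply: functional_extensionality => -[[c' q] e] /=.
  case: c / e; move: (etrans _ _) => E.
  by rewrite (proof_irrelevance _ E erefl).
Qed.

End Equivalence.

Theorem proposition9p1 (C : OpCat) : cat_equiv (ModCat C) (PShCat C).
Proof.
exists (mod_to_psh C), (psh_to_mod C).
by split; [exact: mod_to_psh_unit_iso | exact: mod_to_psh_counit_iso].
Qed.
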